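(* Let $0<\epsilon\le 1$. Let $G$ and $H$ be connected graphs with positive edge resistances $\mathbf{r}_G$ and $\mathbf{r}_H$, and suppose there is a common set $V_{bdry}$ with $V_{bdry}\subseteq V(G)\cap V(H)$, $V_{bdry}\ne V(G)$, $V_{bdry}\neq V(H)$, such that the interior vertices are $V(G)\setminus V_{bdry}$ in $G$ and $V(H)\setminus V_{bdry}$ in $H$. Let $\mathbf{L}_{schur}(G)$ and $\mathbf{L}_{schur}(H)$ be the Schur complements onto $V_{bdry}$ of the Laplacians of $G$ and $H$, and assume $$\mathbf{L}_{schur}(G)\preceq(1+\epsilon)\,\mathbf{L}_{schur}(H).$$ Let $\mathbf{f}(G)$ be a flow on $G$ whose residual $\mathbf{d}(G)=\mathbf{B}_G^T\mathbf{f}(G)$ is zero on every vertex of $V(G)\setminus V_{bdry}$, and let $\mathbf{d}_{bdry}$ be its restriction to $V_{bdry}$. Then there is a flow $\mathbf{f}(H)$ on $H$ whose residual $\mathbf{B}_H^T\mathbf{f}(H)$ equals $\mathbf{d}_{bdry}$ on $V_{bdry}$ and is $0$ on every vertex of $V(H)\setminus V_{bdry}$, and which satisfies $$\mathcal{E}_{\mathbf{f}(H)}(\mathbf{r}_H)\le(1+3\epsilon)\,\mathcal{E}_{\mathbf{f}(G)}(\mathbf{r}_G).$$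
   Context: Edges of an undirected graph are oriented arbitrarily; the edge–vertex incidence matrix $\mathbf{B}$ has $\mathbf{B}(e,u)=-1$ if $u$ is the head of $e$, $1$ if $u$ is the tail of $e$, and $0$ otherwise. A flow is a vector $\mathbf{f}\in\mathbb{R}^E$, and its residual (demand it meets) is $\mathbf{B}^T\mathbf{f}$. Given positive resistances $\mathbf{r}$, the energy of $\mathbf{f}$ is $\mathcal{E}_{\mathbf{f}}(\mathbf{r})=\sum_e\mathbf{r}(e)\mathbf{f}(e)^2$, and the Laplacian is $\mathbf{L}=\mathbf{B}^T\mathbf{R}^{-1}\mathbf{B}$ with $\mathbf{R}=\mathrm{diag}(\mathbf{r})$ (edge weights $1/\mathbf{r}(e)$). Given a partition $V=V_{intr}\cup V_{bdry}$ (both nonempty), write $\mathbf{L}=\begin{pmatrix}\mathbf{L}_{intr}&\mathbf{L}_{mid}\\ \mathbf{L}_{mid}^T&\mathbf{L}_{bdry}\end{pmatrix}$ (rows/columns first $V_{intr}$ then $V_{bdry}$); for connected graphs $\mathbf{L}_{intr}$ is invertible and the Schur complement onto $V_{bdry}$ is $\mathbf{L}_{schur}=\mathbf{L}_{bdry}-\mathbf{L}_{mid}^T\mathbf{L}_{intr}^{-1}\mathbf{L}_{mid}$. $\mathbf{A}\preceq\mathbf{B}$ means $\mathbf{B}-\mathbf{A}$ is positive semidefinite. *)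

From HB Require Import structures.
From mathcomp Require Import all_boot all_order all_algebra.
Set Implicit Arguments. Unset Strict Implicit. Unset Printing Implicit Defensive.
Import Order.TTheory GRing.Theory Num.Theory.
Local Open Scope ring_scope.

(* Vertices are laid out as 'I_(ni + nb): the first ni
   are interior, the last nb are boundary (the common V_bdry). *)

Definition incidence (R : pzRingType) (m n : nat) (hd tl : 'I_m -> 'I_n)
  : 'M[R]_(m, n) :=
  \matrix_(e < m, u < n) ((tl e == u)%:R - (hd e == u)%:R).

Definition adj (m n : nat) (hd tl : 'I_m -> 'I_n) : rel 'I_n :=
  fun u v => [exists e : 'I_m,
     ((hd e == u) && (tl e == v)) || ((tl e == u) && (hd e == v))].

Definition connected_graph (m n : nat) (hd tl : 'I_m -> 'I_n) : Prop :=
  forall u v : 'I_n, connect (adj hd tl) u v.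

Definition laplacian (R : fieldType) (m n : nat) (hd tl : 'I_m -> 'I_n)
  (r : 'I_m -> R) : 'M[R]_n :=
  (incidence R hd tl)^T *m diag_mx (\row_e (r e)^-1) *m incidence R hd tl.

Definition schur (R : fieldType) {ni nb : nat} (L : 'M[R]_(ni + nb))
  : 'M[R]_nb :=
  drsubmx L - (ursubmx L) ^T *m invmx (ulsubmx L) *m ursubmx L.

Definition psd (R : numDomainType) (n : nat) (M : 'M[R]_n) : Prop :=
  forall x : 'cV[R]_n, 0 <= (x^T *m M *m x) ord0 ord0.

Definition loewner_le (R : numDomainType) (n : nat) (A B : 'M[R]_n) : Prop :=
  psd (B - A).

Definition energy (R : pzRingType) (m : nat) (r : 'I_m -> R) (f : 'cV[R]_m) : R :=
  \sum_(e < m) r e * f e ord0 ^+ 2.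

Definition residual (R : pzRingType) (m n : nat) (hd tl : 'I_m -> 'I_n)
  (f : 'cV[R]_m) : 'cV[R]_n := (incidence R hd tl)^T *m f.

From HB Require Import structures.
From mathcomp Require Import all_boot all_order all_algebra.
From mathcomp Require Import ring lra zify.
Set Implicit Arguments. Unset Strict Implicit. Unset Printing Implicit Defensive.
Import Order.TTheory GRing.Theory Num.Theory.
Local Open Scope ring_scope.

(* Let d be the boundary demand of f(G).  Since d sums to zero and H is
   connected, the Laplacian system  L_H phi = (0; d)  is solvable; the
   potential flow  f(H) = R_H^-1 B_H phi  meets the demand (0; d) and has
   energy  a = phi^T L_H phi = psi^T d,  where psi is the boundary part of phi
   and  schur(L_H) psi = d.  On G, the harmonic extension phi_G of psi has
   phi_G^T L_G phi_G = psi^T schur(L_G) psi <= (1 + eps) a  and pairs with the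
   demand of f(G) to give  a  again.  Thomson's principle (weak duality between
   flows and potentials),  2c <phi_G, B_G^T f(G)> - c^2 phi_G^T L_G phi_G
   <= E(f(G)), taken at c = 1/(1 + eps), yields  a <= (1 + eps) E(f(G)),
   which is stronger than the claimed bound (1 + 3 eps). *)

(* Elementary real inequality behind the choice c = 1/k in Thomson's bound:
   if every c gives 2ca - c^2 q <= E and q <= k a, then a <= k E. *)
Lemma duality_bound (R : realFieldType) (a q k E : R) :
  0 < k -> q <= k * a -> (forall c, 2 * c * a - c ^+ 2 * q <= E) -> a <= k * E.
Proof.
move=> k_gt0 qka thomson_c.
set c := k^-1.
have ck : c * k = 1 by rewrite mulVf // gt_eqF.
have c_gt0 : 0 < c by rewrite invr_gt0.
have cq : c ^+ 2 * q <= c * a.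
  have -> : c * a = c ^+ 2 * (k * a) by rewrite expr2 -mulrA (mulrA c k) ck mul1r.
  by rewrite ler_wpM2l // exprn_ge0 // ltW.
have caE : c * a <= E by move: (thomson_c c) cq; lra.
have -> : a = k * (c * a) by rewrite mulrA (mulrC k) ck mul1r.
by rewrite ler_wpM2l // ltW.
Qed.

Lemma loewner_scaleE (R : realFieldType) (n : nat) (A B : 'M[R]_n) (k : R)
    (x : 'cV[R]_n) :
  loewner_le A (k *: B) ->
  (x^T *m A *m x) ord0 ord0 <= k * (x^T *m B *m x) ord0 ord0.
Proof.
have entry (M N : 'M[R]_1) : (k *: M - N) ord0 ord0 = k * M ord0 ord0 - N ord0 ord0.
  by rewrite !mxE.
move=> /(_ x); rewrite mulmxBr mulmxBl -scalemxAr -scalemxAl.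
by rewrite entry subr_ge0.
Qed.

Section OneGraph.
Variables (R : realFieldType) (m n : nat) (hd tl : 'I_m -> 'I_n) (r : 'I_m -> R).
Hypothesis r_gt0 : forall e, 0 < r e.

Local Notation B := (incidence R hd tl).
Local Notation L := (laplacian hd tl r).

Lemma incidence_mulE (x : 'cV[R]_n) e :
  (B *m x) e ord0 = x (tl e) ord0 - x (hd e) ord0.
Proof.
have pick (w : 'I_n) : \sum_u (w == u)%:R * x u ord0 = x w ord0.
  rewrite (bigD1 w) //= eqxx mul1r big1 ?addr0 // => u /negPf.
  by rewrite eq_sym => ->; rewrite mul0r.
rewrite !mxE; under eq_bigr => u _ do rewrite !mxE mulrBl.
by rewrite sumrB !pick.
Qed.

Lemma laplacian_sym : L^T = L.
Proof. by rewrite /laplacian !trmx_mul trmxK tr_diag_mx mulmxA. Qed.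

Lemma laplacian_quadE (x : 'cV[R]_n) :
  (x^T *m L *m x) ord0 ord0 = \sum_e ((B *m x) e ord0) ^+ 2 / r e.
Proof.
rewrite /laplacian -!mulmxA mulmxA -trmx_mul mulmxA mul_mx_diag mxE.
by apply: eq_bigr => e _; rewrite !mxE expr2 mulrC mulrA.
Qed.

Lemma residual_dotE (x : 'cV[R]_n) (f : 'cV[R]_m) :
  (x^T *m residual hd tl f) ord0 ord0 = \sum_e (B *m x) e ord0 * f e ord0.
Proof.
rewrite /residual mulmxA -trmx_mul mxE.
by apply: eq_bigr => e _; rewrite mxE.
Qed.

Lemma energy_ge0 (f : 'cV[R]_m) : 0 <= energy r f.
Proof. by apply: sumr_ge0 => e _; rewrite mulr_ge0 ?sqr_ge0 // ltW. Qed.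

Lemma thomson (c : R) (x : 'cV[R]_n) (f : 'cV[R]_m) :
  2 * c * (x^T *m residual hd tl f) ord0 ord0
    - c ^+ 2 * (x^T *m L *m x) ord0 ord0 <= energy r f.
Proof.
rewrite residual_dotE laplacian_quadE !mulr_sumr -sumrB.
apply: ler_sum => e _.
set y := (B *m x) e ord0; set z := f e ord0; set w := c * y / r e.
have re_gt0 := r_gt0 e; have re_neq0 : r e != 0 by rewrite gt_eqF.
have -> : 2 * c * (y * z) - c ^+ 2 * (y ^+ 2 / r e)
          = r e * z ^+ 2 - r e * (z - w) ^+ 2 by rewrite /w; field.
by rewrite gerBl mulr_ge0 ?sqr_ge0 // ltW.
Qed.

Definition potential_flow (x : 'cV[R]_n) : 'cV[R]_m :=
  diag_mx (\row_e (r e)^-1) *m (B *m x).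

Lemma potential_flow_residual (x : 'cV[R]_n) :
  residual hd tl (potential_flow x) = L *m x.
Proof. by rewrite /residual /potential_flow /laplacian !mulmxA. Qed.

Lemma potential_flow_energy (x : 'cV[R]_n) :
  energy r (potential_flow x) = (x^T *m L *m x) ord0 ord0.
Proof.
rewrite laplacian_quadE; apply: eq_bigr => e _.
rewrite /potential_flow mul_diag_mx !mxE.
by field; rewrite gt_eqF.
Qed.

Lemma incidence_ones : B *m (const_mx 1 : 'cV[R]_n) = 0.
Proof. by apply/colP => e; rewrite incidence_mulE !mxE subrr. Qed.

Lemma residual_sum0 (f : 'cV[R]_m) :
  (residual hd tl f)^T *m (const_mx 1 : 'cV[R]_n) = 0.
Proof. by rewrite /residual trmx_mul trmxK -mulmxA incidence_ones mulmx0. Qed.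

Hypothesis conn : connected_graph hd tl.

Lemma laplacian_quad0_const (x : 'cV[R]_n) :
  (x^T *m L *m x) ord0 ord0 = 0 -> forall u v, x u ord0 = x v ord0.
Proof.
rewrite laplacian_quadE => quad0.
have edge_eq e : x (tl e) ord0 = x (hd e) ord0.
  have terms_ge0 i : true -> 0 <= ((B *m x) i ord0) ^+ 2 / r i.
    by rewrite divr_ge0 ?sqr_ge0 // ltW.
  have /eqP := psumr_eq0P terms_ge0 quad0 (i := e) isT.
  rewrite mulf_eq0 invr_eq0 (gt_eqF (r_gt0 e)) orbF sqrf_eq0.
  by rewrite incidence_mulE subr_eq0 => /eqP.
move=> u v.
have closed_level : closed (adj hd tl) [pred w | x w ord0 == x u ord0].
  move=> a b /existsP[e /orP[] /andP[/eqP <- /eqP <-]];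
  by rewrite !inE edge_eq.
have := closed_connect closed_level (conn u v).
by rewrite !inE eqxx => /esym /eqP.
Qed.

Lemma laplacian_left_kernel (u : 'rV[R]_n) (i0 : 'I_n) :
  u *m L = 0 -> u = u ord0 i0 *: const_mx 1.
Proof.
move=> uL.
have Lu : L *m u^T = 0 by rewrite -laplacian_sym -trmx_mul uL trmx0.
have quad0 : ((u^T)^T *m L *m u^T) ord0 ord0 = 0.
  by rewrite -mulmxA Lu mulmx0 mxE.
apply/rowP => j; rewrite !mxE mulr1.
by have := laplacian_quad0_const quad0 j i0; rewrite !mxE.
Qed.

(* The
   kernel being one-dimensional, L has rank n - 1; its rows lie in the
   (n - 1)-dimensional space orthogonal to the constants, hence span it. *)
Lemma laplacian_solvable (D : 'cV[R]_n) (i0 : 'I_n) :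
  D^T *m (const_mx 1 : 'cV[R]_n) = 0 -> exists x, L *m x = D.
Proof.
move=> D_sum0.
set ones := (const_mx 1 : 'cV[R]_n).
have kerL_ones : (kermx L <= (const_mx 1 : 'rV[R]_n))%MS.
  apply/row_subP => i; rewrite (laplacian_left_kernel i0 (u := row i (kermx L))).
    by rewrite scalemx_sub.
  by rewrite -row_mul mulmx_ker row0.
have rankL : (n - 1 <= \rank L)%N.
  have := leq_trans (mxrankS kerL_ones) (rank_leq_row _).
  rewrite mxrank_ker; lia.
have L_sub : (L <= kermx ones)%MS.
  by rewrite sub_kermx /laplacian -!mulmxA /ones incidence_ones !mulmx0.
have rank_ones : \rank ones = 1%N.
  apply/eqP; rewrite eqn_leq rank_leq_col /= lt0n mxrank_eq0.
  by apply/eqP => /colP /(_ i0); rewrite !mxE => /eqP; rewrite oner_eq0.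
have sub_L : (kermx ones <= L)%MS.
  rewrite -(mxrank_leqif_sup L_sub).2 eqn_leq mxrankS //= mxrank_ker rank_ones.
  have := rank_leq_row L; lia.
have : (D^T <= L)%MS by apply: submx_trans sub_L; rewrite sub_kermx D_sum0.
case/submxP => E DE; exists E^T.
by rewrite -laplacian_sym -trmx_mul -DE trmxK.
Qed.

End OneGraph.

(* A demand vanishing on the interior has a boundary part of total zero, so
   the same boundary demand may be posed on a graph with any interior. *)
Lemma boundary_demand_sum0 (R : realFieldType) (m ni nb : nat)
    (hd tl : 'I_m -> 'I_(ni + nb)) (f : 'cV[R]_m) (ni' : nat) :
  usubmx (residual hd tl f) = 0 ->
  (col_mx (0 : 'cV[R]_ni') (dsubmx (residual hd tl f)))^T
    *m (const_mx 1 : 'cV[R]_(ni' + nb)) = 0.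
Proof.
move=> interior0; have := residual_sum0 hd tl f.
rewrite -[residual hd tl f]vsubmxK interior0 col_mxKd -!col_mx_const.
by rewrite !tr_col_mx !mul_row_col !trmx0 !mul0mx !add0r.
Qed.

Lemma dot_col0 (R : pzRingType) (ni nb : nat) (a : 'cV[R]_ni) (psi d : 'cV[R]_nb) :
  (col_mx a psi)^T *m col_mx 0 d = psi^T *m d.
Proof. by rewrite tr_col_mx mul_row_col mulmx0 add0r. Qed.

Section SchurComplement.
Variables (R : realFieldType) (m ni nb : nat).
Variables (hd tl : 'I_m -> 'I_(ni + nb)) (r : 'I_m -> R).
Hypothesis r_gt0 : forall e, 0 < r e.
Hypothesis conn : connected_graph hd tl.
Hypothesis nb_gt0 : (0 < nb)%N.

Local Notation L := (laplacian hd tl r).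

Lemma laplacian_dlsub : dlsubmx L = (ursubmx L)^T.
Proof. by rewrite trmx_ursub laplacian_sym. Qed.

(* The interior block is invertible: a potential vanishing on the (nonempty)
   boundary with zero energy vanishes everywhere. *)
Lemma interior_block_unit : ulsubmx L \in unitmx.
Proof.
rewrite -row_free_unit -kermx_eq0 -submx0; apply/row_subP => i.
set u := row i _.
have uL : u *m ulsubmx L = 0 by rewrite -row_mul mulmx_ker row0.
clearbody u.
set x := col_mx u^T (0 : 'cV[R]_nb).
have quad0 : (x^T *m L *m x) ord0 ord0 = 0.
  rewrite /x tr_col_mx trmxK trmx0 -mulmxA -[L]submxK.
  rewrite mul_block_col mul_row_col !mulmx0 !addr0 mul0mx addr0.
  have -> : ulsubmx L *m u^T = 0.
    by rewrite -[ulsubmx L]trmxK trmx_ulsub laplacian_sym -trmx_mul uL trmx0.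
  by rewrite mulmx0 mxE.
rewrite submx0; apply/eqP/rowP => j; rewrite mxE.
have -> : u ord0 j = x (lshift nb j) ord0 by rewrite /x col_mxEu mxE.
rewrite (laplacian_quad0_const r_gt0 conn quad0 _ (rshift ni (Ordinal nb_gt0))).
by rewrite /x col_mxEd mxE.
Qed.

Definition harmonic_ext (psi : 'cV[R]_nb) : 'cV[R]_(ni + nb) :=
  col_mx (- (invmx (ulsubmx L) *m ursubmx L *m psi)) psi.

Lemma laplacian_harmonic_ext psi :
  L *m harmonic_ext psi = col_mx 0 (schur L *m psi).
Proof.
rewrite /harmonic_ext -{1}[L]submxK mul_block_col.
rewrite !mulmxN -!mulmxA (mulmxA (ulsubmx L)) mulmxV ?interior_block_unit //.
rewrite mul1mx addNr laplacian_dlsub /schur mulmxBl addrC !mulmxA.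
by rewrite -!mulmxA.
Qed.

Lemma harmonic_ext_quad psi :
  (harmonic_ext psi)^T *m L *m harmonic_ext psi = psi^T *m schur L *m psi.
Proof. by rewrite -mulmxA laplacian_harmonic_ext dot_col0 mulmxA. Qed.

Lemma schur_boundary_solve (phi : 'cV[R]_(ni + nb)) (d : 'cV[R]_nb) :
  L *m phi = col_mx 0 d -> schur L *m dsubmx phi = d.
Proof.
rewrite -{1}[phi]vsubmxK -{1}[L]submxK mul_block_col => /eq_col_mx [ui dd].
have u_phi : usubmx phi = - (invmx (ulsubmx L) *m ursubmx L *m dsubmx phi).
  apply/eqP; rewrite -subr_eq0 opprK; apply/eqP.
  rewrite -[usubmx phi](mulKmx interior_block_unit) -!mulmxA -mulmxDr.
  by rewrite ui mulmx0.
rewrite -dd u_phi /schur laplacian_dlsub mulmxBl addrC mulmxN !mulmxA.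
by rewrite -mulmxA.
Qed.

End SchurComplement.

Theorem mainTheorem8 (R : realFieldType) (eps : R)
  (nb niG niH mG mH : nat)
  (hdG tlG : 'I_mG -> 'I_(niG + nb)) (rG : 'I_mG -> R)
  (hdH tlH : 'I_mH -> 'I_(niH + nb)) (rH : 'I_mH -> R) :
  0 < eps -> eps <= 1 ->
  (0 < nb)%N -> (0 < niG)%N -> (0 < niH)%N ->
  connected_graph hdG tlG -> connected_graph hdH tlH ->
  (forall e, 0 < rG e) -> (forall e, 0 < rH e) ->
  loewner_le (schur (laplacian hdG tlG rG))
             ((1 + eps) *: schur (laplacian hdH tlH rH)) ->
  forall fG : 'cV[R]_mG,
    usubmx (residual hdG tlG fG) = 0 ->
    exists fH : 'cV[R]_mH,
      [/\ usubmx (residual hdH tlH fH) = 0,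
          dsubmx (residual hdH tlH fH) = dsubmx (residual hdG tlG fG) &
          energy rH fH <= (1 + 3 * eps) * energy rG fG].
Proof.
move=> eps_gt0 _ nb_gt0 _ _ connG connH rG_gt0 rH_gt0 schur_le fG interiorG0.
have [phi L_phi] := laplacian_solvable rH_gt0 connH
  (rshift niH (Ordinal nb_gt0)) (boundary_demand_sum0 niH interiorG0).
set d := dsubmx (residual hdG tlG fG) in L_phi *.
have resG : residual hdG tlG fG = col_mx 0 d by rewrite -interiorG0 vsubmxK.
set psi := dsubmx phi; set a := (psi^T *m d) ord0 ord0.
exists (potential_flow hdH tlH rH phi).
rewrite potential_flow_residual L_phi col_mxKu col_mxKd (potential_flow_energy _ _ rH_gt0).
split=> //.
have -> : (phi^T *m laplacian hdH tlH rH *m phi) ord0 ord0 = a.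
  by rewrite -mulmxA L_phi -[phi]vsubmxK dot_col0.
have SH_psi := schur_boundary_solve rH_gt0 connH nb_gt0 L_phi.
have quadG_le : (psi^T *m schur (laplacian hdG tlG rG) *m psi) ord0 ord0
                <= (1 + eps) * a.
  by rewrite /a -SH_psi mulmxA; apply: loewner_scaleE.
have a_le : a <= (1 + eps) * energy rG fG.
  apply: (duality_bound _ quadG_le) => [|c]; first lra.
  have pairing : ((harmonic_ext hdG tlG rG psi)^T *m residual hdG tlG fG)
                   ord0 ord0 = a by rewrite resG /harmonic_ext dot_col0.
  rewrite -pairing -(harmonic_ext_quad rG_gt0 connG nb_gt0).
  exact: thomson.
apply: (le_trans a_le); rewrite ler_wpM2r ?(energy_ge0 rG_gt0) //; lra.
Qed.
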